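(* Let $G$ be a distribution function on $\mathbb R$ whose support is $\mathbb J=\bigcup_{\alpha=1}^m[a_\alpha,b_\alpha]$, a union of pairwise disjoint intervals, such that $G$ has a bounded absolutely continuous density $g$ with $g(x)\sim|x-c|^{1/2}$ near each endpoint $c$ of the support. Let $F$ be any distribution function. Let $0<\varepsilon<\frac12\min_\alpha(b_\alpha-a_\alpha)$, let $0<v\le\frac{\varepsilon^{3/2}}{2(\sqrt2+1)}$ and $V>v$. For $x\in\mathbb J'_\varepsilon$ put $v'=v/\sqrt{\gamma(x)}$. Then $$\sup_{x\in\mathbb J'_\varepsilon}\Big|\int_{-\infty}^x\operatorname{Im}\big(S_F(u+iv')-S_G(u+iv')\big)du\Big|\le\int_{-\infty}^{\infty}|S_F(u+iV)-S_G(u+iV)|\,du+\sup_{x\in\mathbb J'_\varepsilon}\Big|\int_{v'}^V\big(S_F(x+iu)-S_G(x+iu)\big)du\Big|.$$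
   Context: For $x\in\mathbb J$, $\gamma(x)=\min_\alpha\{|x-a_\alpha|,|b_\alpha-x|\}$. For $\varepsilon>0$, $\mathbb J_\alpha^{(\varepsilon)}=\{x\in[a_\alpha,b_\alpha]:\gamma(x)\ge\varepsilon\}$ and $\mathbb J'_\varepsilon=\bigcup_{\alpha=1}^m\mathbb J_\alpha^{(\varepsilon/2)}$. For a distribution function $F$, $S_F(z)=\int_{-\infty}^\infty\frac{1}{x-z}\,dF(x)$ is its Stieltjes transform ($\operatorname{Im}z>0$). *)

From HB Require Import structures.
From mathcomp Require Import all_boot all_order all_algebra.
From mathcomp Require Import all_classical all_reals all_analysis.

Set Implicit Arguments.
Unset Strict Implicit.
Unset Printing Implicit Defensive.
Import Order.TTheory GRing.Theory Num.Theory.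
Import numFieldNormedType.Exports.
Local Open Scope classical_set_scope.
Local Open Scope ring_scope.

Section Defs.
Variable R : realType.

(* This is the library structure
   [cumulativeBounded 0 1]; its Lebesgue-Stieltjes measure dF is
   [lebesgue_stieltjes_measure F]. *)
Definition distr_fun := cumulativeBounded (0:R) (1:R).

Definition distr_support (F : R -> R) : set R :=
  [set x | forall e : R, 0 < e -> F (x - e) < F (x + e)].

Definition Jset (m : nat) (a b : 'I_m -> R) : set R :=
  [set x | exists i, a i <= x <= b i].

Definition gammaJ (m : nat) (a b : 'I_m -> R) (x : R) : R :=
  inf [set Num.min `|x - a i| `|b i - x| | i in [set: 'I_m]].

Definition Jprime (m : nat) (a b : 'I_m -> R) (eps : R) : set R :=
  [set x | exists i, a i <= x <= b i /\ eps / 2 <= gammaJ a b x].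

Definition abs_continuous_fun (f : R -> R) : Prop :=
  forall e : R, 0 < e -> exists2 d : R, 0 < d &
    forall (n : nat) (s t : 'I_n -> R),
      (forall k, s k <= t k) ->
      (forall k l, k != l -> t k <= s l \/ t l <= s k) ->
      \sum_(k < n) (t k - s k) < d ->
      \sum_(k < n) `|f (t k) - f (s k)| < e.

Definition sqrt_behaviour_near (g : R -> R) (J : set R) (c : R) : Prop :=
  exists C1 C2 d : R, [/\ 0 < C1, 0 < C2, 0 < d &
    forall x, J x -> `|x - c| < d ->
      C1 * Num.sqrt `|x - c| <= g x <= C2 * Num.sqrt `|x - c| ].

(* Stieltjes transform S_F(z) = \int 1/(y - z) dF(y), z = u + i v, given by
   its real and imaginary parts:
   1/(y - u - i v) = ((y - u) + i v) / ((y - u)^2 + v^2). *)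
Definition stieltjes_re (F : distr_fun) (u v : R) : R :=
  \int[lebesgue_stieltjes_measure F]_y ((y - u) / ((y - u) ^+ 2 + v ^+ 2)).
Definition stieltjes_im (F : distr_fun) (u v : R) : R :=
  \int[lebesgue_stieltjes_measure F]_y (v / ((y - u) ^+ 2 + v ^+ 2)).

Definition cmod (p q : R) : R := Num.sqrt (p ^+ 2 + q ^+ 2).

Definition oint (s t : R) (f : R -> R) : R :=
  if s <= t then \int[lebesgue_measure]_(u in `[s, t]) f u
  else - \int[lebesgue_measure]_(u in `[t, s]) f u.

End Defs.

(* Fubini's theorem against the Poisson kernel gives, for every distribution
   function H and w > 0,
     \int_{-oo}^x Im S_H(u + i w) du = P_H(w, x)
       := \int (atan ((x - y) / w) + pi / 2) dH(y),
   and against the conjugate Poisson kernel, for 0 < s <= t,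
     \int_s^t Re S_H(x + i u) du = P_H(t, x) - P_H(s, x).
   Writing D = P_F - P_G, the triangle inequality
     |D(w, x)| <= |D(V, x)| + |D(V, x) - D(w, x)|
   bounds the left-hand side by \int_{-oo}^x |Im (S_F - S_G)(u + i V)| du plus
   |\int_w^V Re (S_F - S_G)(x + i u) du|, which is the claim at w = v'(x). *)

From HB Require Import structures.
From mathcomp Require Import all_boot all_order all_algebra.
From mathcomp Require Import all_classical all_reals all_analysis.
From mathcomp Require Import measurable_realfun.
From mathcomp Require Import ring lra.
Import Order.TTheory GRing.Theory Num.Theory.
Import numFieldNormedType.Exports.
Local Open Scope classical_set_scope.
Local Open Scope ring_scope.

Lemma subrACA (V : zmodType) (a b c d : V) : (a - b) - (c - d) = (a - c) - (b - d).
Proof. by rewrite !opprB addrACA [RHS]addrACA [- c + _]addrC. Qed.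

Lemma RintegralBE {d} {T : measurableType d} {R : realType}
    {mu : {measure set T -> \bar R}} {D : set T} {f g : T -> R} {a b : R} :
  measurable D -> mu.-integrable D (EFin \o f) -> mu.-integrable D (EFin \o g) ->
  \int[mu]_(x in D) f x = a -> \int[mu]_(x in D) g x = b ->
  \int[mu]_(x in D) (f x - g x) = a - b.
Proof. by move=> mD mf mg <- <-; exact: RintegralB. Qed.

Section real_facts.
Context {R : realType}.

Lemma measurable_inv : measurable_fun setT (@GRing.inv R).
Proof.
rewrite -(setUv [set 0]); apply/measurable_funU => //.
  exact: measurableC.
split; first exact: measurable_fun_set1.
apply: open_continuous_measurable_fun.
  exact/closed_openC/accessible_closed_set1/hausdorff_accessible/norm_hausdorff.
by move=> x; rewrite inE /= => x0; apply: inv_continuous; apply/eqP.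
Qed.

Lemma ge0_le_integralT d (T : measurableType d) (mu : {measure set T -> \bar R})
    (f g : T -> \bar R) :
  (forall x, 0 <= f x)%E -> (forall x, f x <= g x)%E ->
  (\int[mu]_x f x <= \int[mu]_x g x)%E.
Proof.
move=> f0 fg; rewrite !ge0_integralTE //; last by move=> x; exact: le_trans (fg x).
apply: ereal_sup_le => _ [h /= hf <-]; exists h => //= x.
exact: le_trans (hf x) (fg x).
Qed.

Lemma sqrD_gt0 (t w : R) : w != 0 -> 0 < t ^+ 2 + w ^+ 2.
Proof. by move=> w0; rewrite ltr_wpDl ?sqr_ge0 // exprn_even_gt0. Qed.

Lemma is_derive1_continuous {h : R -> R} {x d : R} :
  is_derive x 1 h d -> {for x, continuous h}.
Proof. by move=> [dh _]; exact/differentiable_continuous/derivable1_diffP. Qed.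

Lemma atan_addpi2_ge0 (x : R) : 0 <= atan x + pi / 2.
Proof. by have := atan_gtNpi2 x; lra. Qed.

Lemma atan_addpi2_le (x : R) : atan x + pi / 2 <= pi.
Proof. by have := atan_ltpi2 x; lra. Qed.

End real_facts.

Section kernels.
Context {R : realType}.
Local Notation lam := (@lebesgue_measure R).

Definition poisson_kernel (w t : R) : R := w / (t ^+ 2 + w ^+ 2).
Definition conjugate_poisson_kernel (w t : R) : R := t / (t ^+ 2 + w ^+ 2).

Lemma poisson_kernel_ge0 (w t : R) : 0 <= w -> 0 <= poisson_kernel w t.
Proof. by move=> w0; rewrite divr_ge0 // addr_ge0 ?sqr_ge0. Qed.

Lemma poisson_kernel_le (w t : R) : 0 < w -> poisson_kernel w t <= w^-1.
Proof.
move=> w0; have D0 : 0 < t ^+ 2 + w ^+ 2 by rewrite sqrD_gt0 ?gt_eqF.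
by rewrite /poisson_kernel ler_pdivrMr // ler_pdivlMl // -expr2 lerDr sqr_ge0.
Qed.

Lemma normr_conjugate_poisson_kernel_le (w t : R) :
  0 < w -> `|conjugate_poisson_kernel w t| <= w^-1.
Proof.
move=> w0; have D0 : 0 < t ^+ 2 + w ^+ 2 by rewrite sqrD_gt0 ?gt_eqF.
rewrite /conjugate_poisson_kernel normrM normfV (gtr0_norm D0).
rewrite ler_pdivrMr // ler_pdivlMl // -(real_normK (num_real t)).
have := sqr_ge0 (`|t| - w); have := normr_ge0 t; nra.
Qed.

Lemma continuous_poisson_kernel (w : R) : w != 0 -> continuous (poisson_kernel w).
Proof.
move=> w0 t; apply: cvgM; first exact: cvg_cst.
apply: cvgV; first by rewrite gt_eqF // sqrD_gt0.
by apply: cvgD; [exact: exprn_continuous | exact: cvg_cst].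
Qed.

Lemma is_derive_atan_poisson (w c u : R) : w != 0 ->
  is_derive u 1 (fun u => atan ((u + c) / w)) (poisson_kernel w (u + c)).
Proof.
move=> w0.
have dlin : is_derive u 1 (fun u : R => (u + c) / w) w^-1.
  have := is_deriveM (is_deriveD (@is_derive_id _ _ u 1) (is_derive_cst c u 1))
    (is_derive_cst w^-1 u 1).
  by move/is_derive_eq; apply; rewrite /GRing.scale /= mulr0 add0r addr0 mulr1.
apply: is_derive_eq (is_derive1_comp _ dlin) _.
have D0 : (u + c) ^+ 2 + w ^+ 2 != 0 by rewrite gt_eqF ?sqrD_gt0.
by rewrite /poisson_kernel; field; rewrite D0 w0.
Qed.

Lemma is_derive_atan_conjugate_poisson (t u : R) : u != 0 ->
  is_derive u 1 (fun u => - atan (t / u)) (conjugate_poisson_kernel u t).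
Proof.
move=> u0.
have dinv : is_derive u 1 (fun u : R => t / u) (- t / u ^+ 2).
  have := is_deriveM (is_derive_cst t u 1) (is_deriveV u0 (@is_derive_id _ _ u 1)).
  by move/is_derive_eq; apply; rewrite /GRing.scale /= mulr0 addr0 mulr1 mulrN mulNr.
apply: is_derive_eq (is_deriveN (is_derive1_comp _ dinv)) _.
have D0 : t ^+ 2 + u ^+ 2 != 0 by rewrite gt_eqF ?sqrD_gt0.
by rewrite /conjugate_poisson_kernel; field; rewrite D0 u0.
Qed.

Lemma integral_conjugate_poisson_kernel (t s r : R) : 0 < s -> s <= r ->
  (\int[lam]_(u in `[s, r]) (conjugate_poisson_kernel u t)%:E
    = (atan (t / s) - atan (t / r))%:E)%E.
Proof.
move=> s0; rewrite le_eqVlt => /predU1P[<-|sr].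
  by rewrite set_itv1 integral_set1 subrr.
have u0 u : s <= u -> u != 0 by move=> su; rewrite gt_eqF // (lt_le_trans s0 su).
have dF u (su : s <= u) := is_derive_atan_conjugate_poisson t u (u0 u su).
rewrite (continuous_FTC2 sr _ _ (F := fun u => - atan (t / u))).
- by rewrite -EFinB opprK addrC.
- apply: continuous_in_subspaceT => u; rewrite inE /= in_itv /= => /andP[su _].
  apply: cvgM; first exact: cvg_cst.
  apply: cvgV; first by rewrite gt_eqF ?sqrD_gt0 ?u0.
  by apply: cvgD; [exact: cvg_cst | exact: exprn_continuous].
- split.
  + by move=> u; rewrite in_itv /= => /andP[/ltW /dF []].
  + have := is_derive1_continuous (dF s (lexx s)); exact: cvg_at_right_filter.
  + have := is_derive1_continuous (dF r (ltW sr)); exact: cvg_at_left_filter.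
- by move=> u; rewrite in_itv /= derive1E => /andP[/ltW /dF [_ ->]].
Qed.

Lemma integral_poisson_kernel (w y x : R) : 0 < w ->
  (\int[lam]_(u in `]-oo, x]) (poisson_kernel w (y - u))%:E
    = (atan ((x - y) / w) + pi / 2)%:E)%E.
Proof.
move=> w0; have w0' : w != 0 by rewrite gt_eqF.
have k0 t : 0 <= poisson_kernel w t by exact/poisson_kernel_ge0/ltW.
have ky : continuous (fun u => poisson_kernel w (u + y)).
  move=> u; apply: (@continuous_comp _ _ _ (+%R^~ y)); last first.
    exact: (continuous_poisson_kernel w w0' (u + y)).
  by apply: cvgD; [exact: cvg_id | exact: cvg_cst].
have dF u := is_derive_atan_poisson w y u w0'.
rewrite -[x]opprK ge0_integration_by_substitutionNy; last 2 first.
- apply: continuous_subspaceT => u.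
  apply: (@continuous_comp _ _ _ (fun u => y - u)); last first.
    exact: (continuous_poisson_kernel w w0' (y - u)).
  by apply: cvgB; [exact: cvg_cst | exact: cvg_id].
- by move=> u _; exact: k0.
under eq_integral do rewrite /= opprK addrC.
rewrite (ge0_continuous_FTC2y _ _ (F := fun u => atan ((u + y) / w)) (l := pi / 2)).
- rewrite -EFinB opprK; congr EFin.
  have -> : (- x + y) / w = - ((x - y) / w) by rewrite -mulNr opprB addrC.
  by rewrite atanN opprK addrC.
- by move=> u _; exact: k0.
- by apply: continuous_subspaceT; exact: ky.
- apply: cvg_comp; last exact: cvgy_atan.
  apply/cvgryPge => A; exists (A * w - y); split; first exact: num_real.
  by move=> u Au; rewrite ler_pdivlMr //; lra.
- by move=> u _; case: (dF u).
- have := is_derive1_continuous (dF (- x)); exact: cvg_at_right_filter.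
- by move=> u _; rewrite derive1E; case: (dF u) => _ ->.
Qed.

End kernels.

(* [pi] times the distribution function of the convolution of [H] with the
   Cauchy law of scale [w], evaluated at [x]. *)
Definition cauchy_potential {R : realType} (H : distr_fun R) (w x : R) : R :=
  \int[lebesgue_stieltjes_measure H]_y (atan ((x - y) / w) + pi / 2).

Section stieltjes_fubini.
Context {R : realType} (F : distr_fun R).
Local Notation muF := (lebesgue_stieltjes_measure F).
Local Notation lam := (@lebesgue_measure R).
Local Notation RR := (measurableTypeR R * measurableTypeR R)%type.

Lemma distr_measure_setT : muF setT = 1%E.
Proof. exact: probability_setT. Qed.

Lemma integral_distr_cst (c : \bar R) : (\int[muF]_y c = c)%E.
Proof.
transitivity (c * muF setT)%E; first exact: integral_cst.
by rewrite distr_measure_setT mule1.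
Qed.

Lemma distr_bounded_integrable {h : R -> R} {M : R} :
  measurable_fun setT h -> (forall y, `|h y| <= M) ->
  muF.-integrable setT (EFin \o h).
Proof.
move=> mh hM; apply: measurable_bounded_integrable => //.
  by apply: (@le_lt_trans _ _ 1%E); [rewrite -distr_measure_setT | exact: ltry].
exists M; split; first exact: num_real.
by move=> r Mr y _; apply: le_trans (hM y) (ltW Mr).
Qed.

Lemma distr_bounded_RintegralE {h : R -> R} {M : R} :
  measurable_fun setT h -> (forall y, `|h y| <= M) ->
  (\int[muF]_y h y)%:E = (\int[muF]_y (h y)%:E)%E.
Proof.
move=> mh hM; rewrite /Rintegral fineK //.
by have := integrable_fin_num measurableT (distr_bounded_integrable mh hM).
Qed.

(* [D] is typed in [measurableTypeR R], the domain of [lebesgue_measure];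
   over the canonical measurable structure of [R] the integrability
   statements below would not unify. *)
Lemma fubini_distr (D : set (measurableTypeR R)) (k : R -> R -> R) :
  measurable D -> measurable_fun setT (fun p : RR => k p.1 p.2) ->
  (forall u, D u -> exists M, forall y, `|k u y| <= M) ->
  (\int[muF]_y \int[lam]_(u in D) `|k u y|%:E < +oo)%E ->
  lam.-integrable D (fun u => (\int[muF]_y k u y)%:E) /\
  (\int[lam]_(u in D) (\int[muF]_y k u y)%:E
     = \int[muF]_y \int[lam]_(u in D) (k u y)%:E)%E.
Proof.
move=> mD mk kb kfin.
pose f (p : RR) := (\1_D p.1 * k p.1 p.2)%:E.
have fD y : (\int[lam]_u f (u, y) = \int[lam]_(u in D) (k u y)%:E)%E.
  rewrite [RHS]integral_mkcond; apply: eq_integral => u _.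
  by rewrite /f /patch indicE; case: ifPn; rewrite ?mul1r ?mul0r.
have imf : (lam \x muF)%E.-integrable setT f.
  apply/integrable21ltyP.
    apply/measurable_EFinP; apply: measurable_funM => //.
    exact: measurableT_comp (measurable_indic mD) measurable_fst.
  apply: le_lt_trans kfin; rewrite le_eqVlt; apply/predU1P; left.
  apply: (@eq_integral _ _ _ muF) => y _; rewrite [RHS]integral_mkcond.
  apply: eq_integral => u _.
  by rewrite /f /patch indicE; case: ifPn => _ /=; rewrite ?mul1r ?mul0r ?normr0.
have FE : fubini_F muF f = (fun u => (\int[muF]_y k u y)%:E) \_ D.
  apply/funext => u; rewrite /fubini_F /patch /f; case: ifPn => [/set_mem Du|Du].
    have [M kM] := kb u Du.
    have mku : measurable_fun setT (k u) := measurableT_comp mk (pair1_measurable u).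
    rewrite (distr_bounded_RintegralE mku kM).
    by apply: eq_integral => y _; rewrite indicE mem_set // mul1r.
  by apply: integral0_eq => y _; rewrite indicE (negbTE Du) mul0r.
split.
  by apply: (integrable_mkcond _ mD).2; rewrite -FE; exact: integrable_fubini_F.
rewrite integral_mkcond -FE /fubini_F (Fubini imf).
by apply: eq_integral => y _; exact: fD.
Qed.

Let measurable_cauchy_integrand (w x : R) :
  measurable_fun setT (fun y : R => atan ((x - y) / w) + pi / 2).
Proof.
apply: continuous_measurable_fun => y; apply: cvgD; last exact: cvg_cst.
apply: continuous_comp; last exact: continuous_atan.
by apply: cvgM; [apply: cvgB; [exact: cvg_cst | exact: cvg_id] | exact: cvg_cst].
Qed.

Let normr_cauchy_integrand_le (w x y : R) : `|atan ((x - y) / w) + pi / 2| <= pi.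
Proof. by rewrite ger0_norm ?atan_addpi2_ge0 ?atan_addpi2_le. Qed.

Lemma integrable_cauchy_integrand (w x : R) :
  muF.-integrable setT (EFin \o (fun y : R => atan ((x - y) / w) + pi / 2)).
Proof.
exact: distr_bounded_integrable (measurable_cauchy_integrand w x)
  (normr_cauchy_integrand_le w x).
Qed.

Lemma cauchy_potentialE (w x : R) : (cauchy_potential F w x)%:E
  = (\int[muF]_y (atan ((x - y) / w) + pi / 2)%:E)%E.
Proof.
exact: distr_bounded_RintegralE (measurable_cauchy_integrand w x)
  (normr_cauchy_integrand_le w x).
Qed.

Lemma stieltjes_im_fubini (w x : R) : 0 < w ->
  lam.-integrable `]-oo, x] (EFin \o (fun u => stieltjes_im F u w)) /\
  \int[lam]_(u in `]-oo, x]) stieltjes_im F u w = cauchy_potential F w x.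
Proof.
move=> w0; pose k u y := poisson_kernel w (y - u).
have k0 u y : 0 <= k u y by exact/poisson_kernel_ge0/ltW.
have kE y : (\int[lam]_(u in `]-oo, x]) (k u y)%:E
    = (atan ((x - y) / w) + pi / 2)%:E)%E.
  exact: integral_poisson_kernel.
have [] := @fubini_distr `]-oo, x] k (measurable_itv _).
- apply: measurable_funM; first exact: measurable_cst.
  apply: measurableT_comp; first exact: measurable_inv.
  apply: measurable_funD; last exact: measurable_cst.
  by apply: measurable_funX; apply: measurable_funB.
- by move=> u _; exists w^-1 => y; rewrite ger0_norm ?poisson_kernel_le.
- apply: (@le_lt_trans _ _ (\int[muF]_y pi%:E)%E); last first.
    by rewrite integral_distr_cst ltry.
  apply: ge0_le_integralT => y; first exact: integral_ge0.
  under eq_integral do rewrite ger0_norm //.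
  by rewrite kE lee_fin atan_addpi2_le.
- move=> ik kF; split; first exact: ik.
  rewrite /Rintegral kF; under eq_integral do rewrite kE.
  by rewrite -cauchy_potentialE.
Qed.

Lemma stieltjes_re_fubini (x s r : R) : 0 < s -> s <= r ->
  lam.-integrable `[s, r] (EFin \o (fun u => stieltjes_re F x u)) /\
  \int[lam]_(u in `[s, r]) stieltjes_re F x u
    = cauchy_potential F r x - cauchy_potential F s x.
Proof.
move=> s0 sr; pose k u y := conjugate_poisson_kernel u (y - x).
have mk : measurable_fun setT (fun p : RR => k p.1 p.2).
  apply: measurable_funM; first exact: measurable_funB.
  apply: measurableT_comp; first exact: measurable_inv.
  by apply: measurable_funD; apply: measurable_funX => //; exact: measurable_funB.
have kb u y : `[s, r]%classic u -> `|k u y| <= s^-1.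
  rewrite /= in_itv /= => /andP[su _]; have u0 := lt_le_trans s0 su.
  apply: le_trans (normr_conjugate_poisson_kernel_le _ _ u0) _.
  by rewrite lef_pV2 ?posrE.
have kE y : (\int[lam]_(u in `[s, r]) (k u y)%:E
    = ((atan ((x - y) / r) + pi / 2) - (atan ((x - y) / s) + pi / 2))%:E)%E.
  rewrite integral_conjugate_poisson_kernel //; congr EFin.
  have e c : (y - x) / c = - ((x - y) / c) by rewrite -mulNr opprB.
  by rewrite !e !atanN; ring.
have [] := @fubini_distr `[s, r] k (measurable_itv _) mk.
- by move=> u Du; exists s^-1 => y; exact: kb.
- apply: (@le_lt_trans _ _ (\int[muF]_y ((s^-1)%:E * lam `[s, r]))%E).
    apply: ge0_le_integralT => y; first exact: integral_ge0.
    rewrite -integral_cst //; apply: ge0_le_integral => //.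
    + apply/measurable_EFinP; apply: measurableT_comp => //.
      have mky := measurableT_comp mk (pair2_measurable y).
      by apply: measurable_funTS; exact: mky.
    + by move=> u Du; rewrite lee_fin kb.
  rewrite integral_distr_cst lebesgue_measure_itv /=.
  by case: ifP => _; rewrite -?EFinB -?EFinM ?mule0 ltry.
- move=> ik kF; split; first exact: ik.
  rewrite /Rintegral kF; under eq_integral do rewrite kE EFinB.
  rewrite (integralB_EFin measurableT (integrable_cauchy_integrand r x)
    (integrable_cauchy_integrand s x)).
  by rewrite -!cauchy_potentialE.
Qed.

End stieltjes_fubini.

Section smoothing_inequality.
Context {R : realType}.
Local Notation lam := (@lebesgue_measure R).

Lemma normr_le_cmodl (p q : R) : `|p| <= cmod p q.
Proof. by rewrite /cmod -sqrtr_sqr ler_wsqrtr // lerDl sqr_ge0. Qed.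

Lemma normr_le_cmodr (p q : R) : `|q| <= cmod p q.
Proof. by rewrite /cmod -sqrtr_sqr ler_wsqrtr // lerDr sqr_ge0. Qed.

Lemma lee_normr_addcmodB (a b q : R) (I : \bar R) :
  (`|a|%:E <= I)%E -> (`|b|%:E <= I + (cmod (a - b) q)%:E)%E.
Proof.
move=> aI; apply: le_trans (_ : _ <= `|a|%:E + `|a - b|%:E)%E _.
  by rewrite -EFinD lee_fin -{1}(subKr a b) ler_normB.
by apply: leeD => //; rewrite lee_fin normr_le_cmodl.
Qed.

Lemma Rintegral_stieltjes_reB (F G : distr_fun R) (x s t : R) : 0 < s -> s <= t ->
  \int[lam]_(u in `[s, t]) (stieltjes_re F x u - stieltjes_re G x u)
  = (cauchy_potential F t x - cauchy_potential G t x)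
    - (cauchy_potential F s x - cauchy_potential G s x).
Proof.
move=> s0 st; have [iF EF] := stieltjes_re_fubini F x _ _ s0 st.
have [iG EG] := stieltjes_re_fubini G x _ _ s0 st.
(* Chaining with [eq_trans] instead of rewriting: matching a Stieltjes integral
   of [F] against one of [G] unfolds both and takes minutes. *)
have mI : measurable (`[s, t]%classic : set (measurableTypeR R)).
  exact: measurable_itv.
by apply: eq_trans (RintegralBE mI iF iG EF EG) _; exact: subrACA.
Qed.

Lemma oint_stieltjes_reB (F G : distr_fun R) (x s t : R) : 0 < s -> 0 < t ->
  oint s t (fun u => stieltjes_re F x u - stieltjes_re G x u)
  = (cauchy_potential F t x - cauchy_potential G t x)
    - (cauchy_potential F s x - cauchy_potential G s x).
Proof.
move=> s0 t0; rewrite /oint; case: ifPn => [st|].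
  exact: Rintegral_stieltjes_reB.
rewrite -ltNge => /ltW ts.
have reB := Rintegral_stieltjes_reB F G x _ _ t0 ts.
by apply: eq_trans (congr1 -%R reB) _; exact: opprB.
Qed.

Lemma stieltjes_im_integralB (F G : distr_fun R) (w x : R) : 0 < w ->
  lam.-integrable `]-oo, x]
    (EFin \o (fun u => stieltjes_im F u w - stieltjes_im G u w)) /\
  \int[lam]_(u in `]-oo, x]) (stieltjes_im F u w - stieltjes_im G u w)
    = cauchy_potential F w x - cauchy_potential G w x.
Proof.
move=> w0; have [iF EF] := stieltjes_im_fubini F _ x w0.
have [iG EG] := stieltjes_im_fubini G _ x w0.
have mI : measurable (`]-oo, x]%classic : set (measurableTypeR R)).
  exact: measurable_itv.
split; last exact: (RintegralBE mI iF iG EF EG).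
by apply: eq_integrable (integrableB mI iF iG) => // u _; rewrite /= EFinB.
Qed.

Lemma stieltjes_im_integral_le (F G : distr_fun R) (x w V : R) : 0 < w -> 0 < V ->
  ((`| \int[lam]_(u in `]-oo, x]) (stieltjes_im F u w - stieltjes_im G u w) |)%:E
   <= integral lam setT (fun u => (cmod (stieltjes_re F u V - stieltjes_re G u V)
                                        (stieltjes_im F u V - stieltjes_im G u V))%:E)
      + (cmod (oint w V (fun u => stieltjes_re F x u - stieltjes_re G x u))
              (oint w V (fun u => stieltjes_im F x u - stieltjes_im G x u)))%:E)%E.
Proof.
move=> w0 V0; have mD : measurable (`]-oo, x]%classic : set (measurableTypeR R)).
  exact: measurable_itv.
have [_ ->] := stieltjes_im_integralB F G _ x w0.
rewrite oint_stieltjes_reB //; apply: lee_normr_addcmodB.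
have [iV <-] := stieltjes_im_integralB F G _ x V0.
apply: le_trans (_ : _ <= (\int[lam]_(u in `]-oo, x])
    `|stieltjes_im F u V - stieltjes_im G u V|)%:E)%E _.
  by rewrite lee_fin; exact: le_normr_Rintegral iV.
rewrite /Rintegral fineK; last by have := integrable_fin_num mD (integrable_norm iV).
rewrite integral_mkcond; apply: ge0_le_integralT => u; rewrite /patch.
  by case: ifP; rewrite // lee_fin.
by case: ifP => _; rewrite lee_fin ?normr_le_cmodr ?sqrtr_ge0.
Qed.

End smoothing_inequality.

Theorem lemmaB3 (R : realType) (m : nat) (a b : 'I_m -> R)
    (G F : distr_fun R) (g : R -> R) (eps v V : R) :
  (0 < m)%N ->
  (forall i, a i < b i) ->
  (forall i j, i != j -> b i < a j \/ b j < a i) ->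
  distr_support G = Jset a b ->
  (forall x, 0 <= g x) ->
  (exists M : R, forall x, `|g x| <= M) ->
  abs_continuous_fun g ->
  (forall x, G x = \int[lebesgue_measure]_(y in `]-oo, x]) g y) ->
  (forall i, sqrt_behaviour_near g (Jset a b) (a i) /\
             sqrt_behaviour_near g (Jset a b) (b i)) ->
  0 < eps -> (forall i, eps < (b i - a i) / 2) ->
  0 < v -> v <= eps * Num.sqrt eps / (2 * (Num.sqrt 2 + 1)) ->
  v < V ->
  let v' := fun x => v / Num.sqrt (gammaJ a b x) in
  (ereal_sup [set (`| \int[lebesgue_measure]_(u in `]-oo, x])
                      (stieltjes_im F u (v' x) - stieltjes_im G u (v' x)) |)%:E
             | x in Jprime a b eps]
   <= integral lebesgue_measure setT
        (fun u => (cmod (stieltjes_re F u V - stieltjes_re G u V)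
                        (stieltjes_im F u V - stieltjes_im G u V))%:E)
      + ereal_sup [set (cmod
             (oint (v' x) V (fun u => stieltjes_re F x u - stieltjes_re G x u))
             (oint (v' x) V (fun u => stieltjes_im F x u - stieltjes_im G x u)))%:E
             | x in Jprime a b eps])%E.
Proof.
move=> _ _ _ _ _ _ _ _ _ eps0 _ v0 _ vV; cbv zeta.
apply: ge_ereal_sup => _ [x Jx <-]; have [_ [_ gx]] := Jx.
have gamma0 : 0 < gammaJ a b x by apply: lt_le_trans gx; rewrite divr_gt0.
have w0 : 0 < v / Num.sqrt (gammaJ a b x) by rewrite divr_gt0 // sqrtr_gt0.
apply: le_trans (stieltjes_im_integral_le F G x _ _ w0 (lt_trans v0 vV)) _.
by apply: leeD => //; apply: ereal_sup_ubound; exists x.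
Qed.
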